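(* Let $S$ and $T$ be IP-regular semigroups, and suppose $T$ has no idempotent elements. Then the free product $S*T$ is IP-regular.
   Context: For a (partial) semigroup $P$, $E(P)$ is the set of idempotents; any subset $X$ carries the induced partial operation ($ab$ defined iff $ab\in X$). For a sequence $\vec{x}=(x_n)_{n\in\omega}$ all of whose finite ordered products $\prod_{i\in a}x_i$ ($a$ finite nonempty subset of $\omega$) are defined, $\mathrm{FP}(\vec{x})$ is the set of these products, $\mathrm{FP}_1(\vec{x})=\mathrm{FP}((x_{n+1})_n)$; an IP-set is a set containing such an $\mathrm{FP}(\vec{x})$. $X$ is strongly IP-regular if for every sequence $\vec{x}$ in $X$ with all finite products defined in $X$, $x_0\mathrm{FP}_1(\vec{x})$ is not an IP-set of $X$. $P$ is IP-regular if $P\setminus E(P)$ is a union of finitely many strongly IP-regular subsets. *)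

From mathcomp Require Import all_boot.
Set Implicit Arguments. Unset Strict Implicit. Unset Printing Implicit Defensive.

Section IP.
Variables (X : Type) (op : X -> X -> X).

(* Ordered finite product  x_{i} x_{j1} ... x_{jk}  over the finite nonempty
   index set {i < j1 < ... < jk}, represented by its least element i and the
   strictly increasing tail r (condition: path ltn i r). *)
Fixpoint fin_prod (x : nat -> X) (i : nat) (r : seq nat) : X :=
  match r with
  | [::] => x i
  | j :: r' => op (x i) (fin_prod x j r')
  end.

Definition FP (x : nat -> X) (z : X) : Prop :=
  exists i r, path ltn i r /\ z = fin_prod x i r.

Definition FP1 (x : nat -> X) : X -> Prop := FP (fun n => x n.+1).

(* all finite products of x are defined in (= lie in) the subset A
   (for the induced partial operation on A) *)
Definition FP_in (A : X -> Prop) (x : nat -> X) : Prop :=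
  forall i r, path ltn i r -> A (fin_prod x i r).

Definition IP_set_of (A B : X -> Prop) : Prop :=
  exists y : nat -> X, FP_in A y /\ (forall z, FP y z -> B z).

Definition x0FP1 (x : nat -> X) (z : X) : Prop :=
  exists w, FP1 x w /\ z = op (x 0) w.

Definition strongly_IP_regular (A : X -> Prop) : Prop :=
  forall x : nat -> X, FP_in A x -> ~ IP_set_of A (x0FP1 x).

Definition is_idem (p : X) : Prop := op p p = p.

Definition IP_regular : Prop :=
  exists (n : nat) (A : nat -> X -> Prop),
    (forall p, ~ is_idem p <-> exists2 k, k < n & A k p) /\
    (forall k, k < n -> strongly_IP_regular (A k)).

End IP.

Section FreeProduct.
Variables (S T : Type) (opS : S -> S -> S) (opT : T -> T -> T).

Definition isl (l : S + T) : bool := if l is inl _ then true else false.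

Fixpoint altb (w : seq (S + T)) : bool :=
  match w with
  | x :: ((y :: _) as w') => (isl x != isl y) && altb w'
  | _ => true
  end.

Definition reduced (w : seq (S + T)) : bool :=
  (if w is _ :: _ then true else false) && altb w.

Definition free_product := {w : seq (S + T) | reduced w}.

Definition merge (x : S + T) (w : seq (S + T)) : seq (S + T) :=
  match x, w with
  | inl a, inl b :: w' => inl (opS a b) :: w'
  | inr a, inr b :: w' => inr (opT a b) :: w'
  | _, _ => x :: w
  end.

Lemma altb_head (y z : S + T) w :
  isl y = isl z -> altb (y :: w) = altb (z :: w).
Proof. by case: w => [|u w] //= ->. Qed.

Lemma merge_reduced x w : reduced w -> reduced (merge x w).
Proof.
case: w => [|y w] //= /andP[_ Hw].
case: x => a; case: y Hw => b Hw /=;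
  by rewrite ?Hw // (altb_head _ (inr b)) // (altb_head _ (inl b)).
Qed.

Lemma foldr_merge_reduced (w1 w2 : seq (S + T)) :
  reduced w2 -> reduced (foldr merge w2 w1).
Proof. by move=> H; elim: w1 => [|x w1 IH] //=; apply: merge_reduced. Qed.

(* multiplication in S * T: concatenation followed by reduction *)
Definition fp_mul (u v : free_product) : free_product :=
  exist _ (foldr merge (proj1_sig v) (proj1_sig u))
        (foldr_merge_reduced (proj1_sig u) (proj2_sig v)).

End FreeProduct.

(* A partial homomorphism f : X -> option Y (multiplicative
   wherever it is defined) pulls strongly IP-regular subsets of Y back to
   strongly IP-regular subsets of X: a sequence witnessing the failure upstairs
   is mapped to one witnessing the failure downstairs.  On S * T there are two
   such maps:
   - fS, defined on the one-letter words [s] with s in S, sending [s] to s;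
   - fT, the "T-content" of a word, i.e. the product in T of its T-letters,
     defined on the words containing at least one T-letter.
   A word without T-letter is a one-letter word [s], idempotent iff s is;
   a word with a T-letter is never idempotent, as T has none.  Hence the
   non-idempotents of S * T are covered by the preimages under fS of the
   finitely many pieces for S and the preimages under fT of those for T,
   and each of these preimages is strongly IP-regular. *)
From Pilot Require Import Defs.
From mathcomp Require Import all_boot.
Set Implicit Arguments. Unset Strict Implicit.

Section PartialHomomorphism.
Variables (X Y : Type) (opX : X -> X -> X) (opY : Y -> Y -> Y).
Variable f : X -> option Y.
Hypothesis f_mul : forall a b a' b', f a = Some a' -> f b = Some b' ->
  f (opX a b) = Some (opY a' b').

Definition preimage (B : Y -> Prop) (p : X) : Prop := exists2 t, f p = Some t & B t.

Lemma fin_prod_hom (x : nat -> X) (y : nat -> Y) :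
  (forall n, f (x n) = Some (y n)) ->
  forall r i, f (fin_prod opX x i r) = Some (fin_prod opY y i r).
Proof.
move=> fxy; elim=> [|j r IHr] i /=; first exact: fxy.
by apply: f_mul; [exact: fxy | exact: IHr].
Qed.

Lemma FP_in_preimage (B : Y -> Prop) (x : nat -> X) :
  FP_in opX (preimage B) x ->
  exists y : nat -> Y, (forall n, f (x n) = Some (y n)) /\ FP_in opY B y.
Proof.
move=> FPx.
have fx n : exists2 t, f (x n) = Some t & B t by exact: (FPx n [::]).
have [t0 _ _] := fx 0.
pose y n := if f (x n) is Some t then t else t0.
have fxy n : f (x n) = Some (y n) by rewrite /y; case: (fx n) => t ->.
exists y; split => // i r ir.
case: (FPx i r ir) => t; rewrite (fin_prod_hom fxy) => -[<-] //.
Qed.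

Lemma strongly_IP_regular_preimage (B : Y -> Prop) :
  strongly_IP_regular opY B -> strongly_IP_regular opX (preimage B).
Proof.
move=> regB x FPx [z [FPz zx]].
have [x' [fxx' FPx']] := FP_in_preimage FPx.
have [z' [fzz' FPz']] := FP_in_preimage FPz.
have fx1 n : f (x n.+1) = Some (x' n.+1) by exact: fxx'.
apply: (regB x' FPx'); exists z'; split => // _ [i [r [ir ->]]].
have [_ [[j [r' [jr' ->]]] zE]] := zx _ (ex_intro _ i (ex_intro _ r (conj ir erefl))).
move: (f_equal f zE); rewrite (fin_prod_hom fzz') (f_mul (fxx' 0) (fin_prod_hom fx1 r' j)).
by case=> ->; exists (fin_prod opY (fun n => x' n.+1) j r'); split => //; exists j, r'.
Qed.

Lemma is_idem_hom p t : f p = Some t -> is_idem opX p -> is_idem opY t.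
Proof. by move=> fp idp; move: (f_mul fp fp); rewrite idp fp => -[]. Qed.

End PartialHomomorphism.

Lemma IP_regular_union (X : Type) (op : X -> X -> X) (n1 n2 : nat)
    (A1 A2 : nat -> X -> Prop) :
  (forall p, ~ is_idem op p <->
     (exists2 k, k < n1 & A1 k p) \/ (exists2 k, k < n2 & A2 k p)) ->
  (forall k, k < n1 -> strongly_IP_regular op (A1 k)) ->
  (forall k, k < n2 -> strongly_IP_regular op (A2 k)) ->
  IP_regular op.
Proof.
move=> cover reg1 reg2.
exists (n1 + n2), (fun k => if k < n1 then A1 k else A2 (k - n1)); split.
  move=> p; apply: iff_trans (cover p) _; split.
    case=> -[k kn Ak].
      by exists k; [exact: ltn_addr | rewrite kn].
    by exists (n1 + k); [rewrite ltn_add2l | rewrite ltnNge leq_addr addKn].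
  case=> k; case: ifP => kn1 kn Ak; first by left; exists k.
  by right; exists (k - n1) => //; rewrite ltn_subLR // leqNgt kn1.
move=> k kn; case: ifP => kn1; first exact: reg1.
by apply: reg2; rewrite ltn_subLR // leqNgt kn1.
Qed.

Section FreeProductContent.
Variables (S T : Type) (opS : S -> S -> S) (opT : T -> T -> T).
Hypothesis assocT : associative opT.

Local Notation word := (seq (S + T)).
Local Notation fpT := (free_product S T).
Local Notation mulST := (fp_mul opS opT).

(* Multiplication of T with an identity None adjoined. *)
Definition omul (a b : option T) : option T :=
  match a, b with
  | Some x, Some y => Some (opT x y)
  | None, _ => b
  | _, None => a
  end.

Lemma omulA : associative omul.
Proof. by case=> [a|] [b|] [c|] //=; rewrite assocT. Qed.

Definition content : word -> option T :=
  foldr (fun l c => if l is inr t then omul (Some t) c else c) None.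

Lemma content_merge l w : content (Defs.merge opS opT l w) = content (l :: w).
Proof.
case: l => a; case: w => [|[b|b] w] //=.
by case: (content w) => [c|] //=; rewrite assocT.
Qed.

Lemma content_mul w1 w2 :
  content (foldr (Defs.merge opS opT) w2 w1) = omul (content w1) (content w2).
Proof.
elim: w1 => [|l w1 IHw] /=; first by case: (content w2).
rewrite content_merge /= IHw; case: l => [s|t] //.
exact: (omulA (Some t) (content w1) (content w2)).
Qed.

Lemma content_None w : reduced w -> content w = None -> exists s, w = [:: inl s].
Proof.
case: w => [|[s|t] w] //=; last by case: (content w).
case: w => [|[s'|t'] w] //=; first by exists s.
by case: (content w).
Qed.

Definition fS (p : fpT) : option S := if sval p is [:: inl s] then Some s else None.
Definition fT (p : fpT) : option T := content (sval p).

Lemma fS_mul a b a' b' : fS a = Some a' -> fS b = Some b' ->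
  fS (mulST a b) = Some (opS a' b').
Proof.
case: a b => [wa ra] [wb rb]; rewrite /fS /=.
case: wa ra => [|[s|t] [|? ?]] //= _ [<-].
by case: wb rb => [|[s'|t'] [|? ?]] //= _ [<-].
Qed.

Lemma fT_mul a b a' b' : fT a = Some a' -> fT b = Some b' ->
  fT (mulST a b) = Some (opT a' b').
Proof. by rewrite /fT /= content_mul => -> ->. Qed.

Lemma not_idem_free_product (noidT : forall t : T, ~ is_idem opT t) (p : fpT) :
  ~ is_idem mulST p <->
  (exists2 s, fS p = Some s & ~ is_idem opS s) \/ (exists t, fT p = Some t).
Proof.
split=> [nidp | [[s fps nids] | [t fpt]] idp].
- case fpt: (fT p) => [t|]; first by right; exists t.
  have [s ps] := content_None (proj2_sig p) fpt.
  left; exists s; first by rewrite /fS ps.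
  move=> ids; apply: nidp; apply: val_inj.
  by rewrite /= ps /= ids.
- exact/nids/(is_idem_hom fS_mul fps idp).
- exact/(noidT t)/(is_idem_hom fT_mul fpt idp).
Qed.

End FreeProductContent.

Theorem mainTheorem12 (S T : Type) (opS : S -> S -> S) (opT : T -> T -> T)
  (assocS : associative opS) (assocT : associative opT)
  (regS : IP_regular opS) (regT : IP_regular opT)
  (noidT : forall t : T, ~ is_idem opT t) :
  IP_regular (fp_mul opS opT).
Proof.
case: regS => nS [AS [coverS regAS]]; case: regT => nT [AT [coverT regAT]].
apply: (IP_regular_union (n1 := nS) (n2 := nT) (A1 := fun k => preimage (@fS S T) (AS k))
                         (A2 := fun k => preimage (fT opT) (AT k))).
- move=> p; apply: iff_trans (not_idem_free_product opS assocT noidT p) _.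
  split=> [[[s fps nids] | [t fpt]] | [[k kn [s fps As]] | [k kn [t fpt At]]]].
  + have [k kn As] := (coverS s).1 nids.
    by left; exists k => //; exists s.
  + have [k kn At] := (coverT t).1 (noidT t).
    by right; exists k => //; exists t.
  + by left; exists s => //; apply/coverS; exists k.
  + by right; exists t.
- by move=> k kn; apply: strongly_IP_regular_preimage (regAS k kn); exact: fS_mul.
- by move=> k kn; apply: strongly_IP_regular_preimage (regAT k kn); exact: fT_mul.
Qed.
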